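(* For $b\in[0,1]$ and an integer $n\ge1$ define $b_n=\max\big(b,\tfrac{1}{n}\lceil (n-1)b\rceil\big)$. Then: (1) $b=b_n$ if and only if $\{nb\}\le b$; (2) $b\le b_n\le b+\tfrac1n$; (3) $\lfloor b\rfloor+\lceil (n-1)b_{n-1}\rceil\le nb_n$ for $n\ge1$.
   Context: $\{x\}=x-\lfloor x\rfloor$ denotes the fractional part of a real number $x$. *)

From mathcomp Require Import all_boot all_order all_algebra.
Set Implicit Arguments. Unset Strict Implicit. Unset Printing Implicit Defensive.
Import Order.TTheory GRing.Theory Num.Theory.
Local Open Scope ring_scope.

Definition fracpart {R : archiRealFieldType} (x : R) : R := x - (Num.floor x)%:~R.

(* Defined for every n : nat; for n = 0
   MathComp's convention 0^-1 = 0 gives b_0 = max(b,0), which only ever appears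
   multiplied by (n-1) = 0 in item (3) with n = 1. *)
Definition bn {R : archiRealFieldType} (b : R) (n : nat) : R :=
  Num.max b (n%:R^-1 * (Num.ceil (n.-1%:R * b))%:~R).

From mathcomp Require Import all_boot all_order all_algebra.
From mathcomp Require Import reals.
From mathcomp Require Import lra.
Import Order.TTheory GRing.Theory Num.Theory.
Local Open Scope ring_scope.

(* Everything follows from n b_n = max(n b, ceil((n-1) b)) for n >= 1.  Since
   {x} <= y iff ceil(x - y) <= x, item (1) says ceil((n-1) b) <= n b, which is
   exactly b_n = b; item (2) is ceil((n-1) b) < (n-1) b + 1.  For (3), the same
   identity at n-1 shows ceil((n-1) b_(n-1)) = ceil((n-1) b): the maximum is
   either (n-1) b, or the integer ceil((n-2) b) when that exceeds (n-1) b, and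
   then it equals ceil((n-1) b) by monotonicity of ceil.  It remains to add
   floor b, which is 0 unless b = 1. *)

Section Bn.
Context {R : archiRealFieldType}.
Implicit Types (b x y : R) (n : nat).

Lemma fracpart_le x y : (fracpart x <= y) = ((Num.ceil (x - y))%:~R <= x).
Proof. by rewrite -floor_ge_int ceil_le_int /fracpart !lerBlDr addrC. Qed.

Lemma mulr_predn b n : (0 < n)%N -> n.-1%:R * b = n%:R * b - b.
Proof. by case: n => // n _; rewrite -natr1 mulrDl mul1r addrK. Qed.

Lemma fracpart_mulr_le b n : (0 < n)%N ->
  (fracpart (n%:R * b) <= b) = ((Num.ceil (n.-1%:R * b))%:~R <= n%:R * b).
Proof. by move=> n_gt0; rewrite fracpart_le mulr_predn. Qed.

Lemma bn_ge b n : b <= bn b n.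
Proof. by rewrite le_max lexx. Qed.

Lemma mulr_bn b n : (0 < n)%N ->
  n%:R * bn b n = Num.max (n%:R * b) (Num.ceil (n.-1%:R * b))%:~R.
Proof.
move=> n_gt0; rewrite /bn maxr_pMr ?ler0n // mulrA divff ?mul1r //.
by rewrite pnatr_eq0 -lt0n.
Qed.

Lemma bn_eq_self b n : (0 < n)%N ->
  (bn b n = b) <-> ((Num.ceil (n.-1%:R * b))%:~R <= n%:R * b).
Proof.
move=> n_gt0; rewrite -ler_pdivrMl ?ltr0n //; split=> [bnE|le_c_b].
  by rewrite -[X in _ <= X]bnE le_max lexx orbT.
by rewrite /bn max_l.
Qed.

Lemma bn_le_addr_inv b n : 0 <= b -> (0 < n)%N -> bn b n <= b + n%:R^-1.
Proof.
move=> b_ge0 n_gt0; have n_pos : 0 < n%:R :> R by rewrite ltr0n.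
rewrite ge_max lerDl invr_ge0 ler0n /= ler_pdivrMl // mulrDr divff ?gt_eqF //.
have c_lt := ceilB1_lt (n.-1%:R * b); rewrite intrB mulr_predn // in c_lt *.
lra.
Qed.

Lemma ceil_mulr_bn b n : 0 <= b -> Num.ceil (n%:R * bn b n) = Num.ceil (n%:R * b).
Proof.
move=> b_ge0; case: (posnP n) => [->|n_gt0]; first by rewrite !mul0r.
rewrite mulr_bn //; set c := Num.ceil (n.-1%:R * b).
have [//|lt_nb_c] := leP (c%:~R) (n%:R * b).
rewrite intrKceil; apply/le_anti.
rewrite le_ceil ?ler_wpM2r ?ler_nat ?leq_pred //=.
by rewrite ceil_le_int ltW.
Qed.

Lemma floor_addr_ceil_le_mulr_bn b n : 0 <= b <= 1 -> (0 < n)%N ->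
  (Num.floor b)%:~R + (Num.ceil (n.-1%:R * b))%:~R <= n%:R * bn b n.
Proof.
move=> /andP[b_ge0 b_le1] n_gt0; rewrite mulr_bn //.
have [b_lt1|b_ge1] := ltP b 1.
  have : (Num.floor b)%:~R <= 0 :> R by rewrite lerz0 floor_le0.
  by rewrite le_max; lra.
have -> : b = 1 by apply/le_anti; rewrite b_le1.
rewrite floor1 !mulr1 [n.-1%:R]pmulrn intrKceil -pmulrn.
by rewrite -[n in n%:R](prednK n_gt0) -natr1 addrC le_max lexx.
Qed.

End Bn.

Theorem lemma1p1 (R : realType) (b : R) (n : nat) :
  0 <= b <= 1 -> (1 <= n)%N ->
  [/\ (b = bn b n <-> fracpart (n%:R * b) <= b),
      b <= bn b n <= b + n%:R^-1
    & (Num.floor b)%:~R + (Num.ceil (n.-1%:R * bn b n.-1))%:~R <= n%:R * bn b n].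
Proof.
move=> b01 n_gt0; have /andP[b_ge0 _] := b01.
split.
- rewrite fracpart_mulr_le //; apply: iff_trans (bn_eq_self _ _ n_gt0).
  by split=> /esym.
- by rewrite bn_ge bn_le_addr_inv.
- by rewrite ceil_mulr_bn // floor_addr_ceil_le_mulr_bn.
Qed.
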